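(* If $n\ge2$ and $q$ is a nonnegative integer with $q<\frac{n}{\log(n+1)+1}-1$, then $(1-1/e)(q+1)^n\le A(n,q)\le(q+1)^n$.
   Context: $A(n,q)$ is the Eulerian number, the number of permutations of $\{1,\dots,n\}$ with exactly $q$ ascents, with $A(n,q)=0$ if $q\ge n$; $\log$ is the natural logarithm. *)

From mathcomp Require Import all_boot all_fingroup.
From Stdlib Require Import Reals.

Set Implicit Arguments. Unset Strict Implicit. Unset Printing Implicit Defensive.

(* Number of ascents of a permutation s of {0,...,n-1} (standing for {1,...,n}):
   positions i with i+1 < n and s(i) < s(i+1),
   encoded as the pairs (i, i+1) of indices in 'I_n. *)
Definition ascents (n : nat) (s : 'S_n) : nat :=
  #|[set ij : 'I_n * 'I_n | (ij.2 == ij.1.+1 :> nat) && (s ij.1 < s ij.2)]|.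

Definition eulerian (n q : nat) : nat :=
  #|[set s : 'S_n | ascents s == q]|.

From mathcomp Require Import all_boot all_fingroup zify.
From Stdlib Require Import Reals Lra.
(* Reals rebinds [^] on nat to [Nat.pow]; restore [expn]. *)
Import ssrnat.

Set Implicit Arguments. Unset Strict Implicit. Unset Printing Implicit Defensive.

(* A permutation s with q ascents is determined by its ascent code, which sends
   s(i) to the number of ascents of s before position i: listing the elements by
   increasing code, ties in decreasing order, gives back s. Hence
   A(n,q) <= (q+1)^n. Conversely, a map f : [n] -> [0,q] listed in this way is
   the ascent code of the resulting permutation unless f has slack at some
   j <= n: lowering by one all values at ranks >= j gives a map into [0,q-1]
   with the same listing. For each j lowering is injective, so
   (q+1)^n <= A(n,q) + (n+1) q^n. Finally x <= (x+1) exp(-1/(x+1)) and the bound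
   on q give (n+1) q^n <= (n+1) (q+1)^n exp(-n/(q+1)) <= (q+1)^n / e. *)

Lemma card_set_sum (T : finType) (P : pred T) : #|[set x | P x]| = \sum_x P x.
Proof.
by rewrite -sum1dep_card big_mkcond; apply: eq_bigr => x _; case: (P x).
Qed.

Lemma card_ord_lt N k : k <= N -> #|[set i : 'I_N | i < k]| = k.
Proof.
move=> le_kN; have widen_inj : injective (widen_ord le_kN).
  by move=> i j /(congr1 val) /= /val_inj.
rewrite -[RHS]card_ord -(card_imset _ widen_inj).
apply: eq_card => i; rewrite inE; apply/idP/imsetP => [lt_ik | [j _ ->]].
  by exists (Ordinal lt_ik); last exact: val_inj.
exact: (ltn_ord j).
Qed.

Section SortByCode.
Variables (n q : nat) (f : {ffun 'I_n -> 'I_q.+1}).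

(* Ties are broken by decreasing index, so that equal values make no ascent. *)
Definition prec (v w : 'I_n) : bool :=
  (f v < f w) || ((f v == f w :> nat) && (w < v)).

Lemma prec_irr v : prec v v = false.
Proof. rewrite /prec; lia. Qed.

Lemma prec_asym v w : prec v w -> prec w v = false.
Proof. rewrite /prec; lia. Qed.

Lemma prec_trans u v w : prec u v -> prec v w -> prec u w.
Proof. rewrite /prec; lia. Qed.

Lemma prec_total v w : v != w -> prec v w || prec w v.
Proof.
by move=> ne_vw; have : nat_of_ord v != nat_of_ord w := ne_vw; rewrite /prec; lia.
Qed.

Definition rank (v : 'I_n) : nat := #|[set w | prec w v]|.

Lemma rank_prec v w : prec v w -> rank v < rank w.
Proof.
move=> lt_vw; apply/proper_card/properP; split.
  by apply/subsetP => u; rewrite !inE => /prec_trans; apply.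
by exists v; rewrite !inE ?prec_irr.
Qed.

Lemma ltn_rank v w : (rank v < rank w) = prec v w.
Proof.
apply/idP/idP => [lt_rk | ]; last exact: rank_prec.
have [eq_vw | /prec_total /orP[// | /rank_prec]] := eqVneq v w; last lia.
by move: lt_rk; rewrite eq_vw ltnn.
Qed.

Lemma rank_inj : injective rank.
Proof.
move=> v w eq_rk; apply/eqP/negPn/negP => /prec_total /orP[] /rank_prec; lia.
Qed.

Lemma rank_bounded v : rank v < n.
Proof.
rewrite -[n in _ < n]card_ord -cardsT; apply/proper_card/properP.
by split; [exact: subsetT | exists v; rewrite !inE ?prec_irr].
Qed.

Lemma rank_le_code v w : rank v <= rank w ->
  (f v < f w) || ((f v == f w :> nat) && (w <= v)).
Proof.
rewrite leq_eqVlt => /orP[/eqP /rank_inj -> | ]; first by rewrite eqxx leqnn orbT.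
by rewrite ltn_rank /prec; lia.
Qed.

Definition rank_ord (v : 'I_n) : 'I_n := Ordinal (rank_bounded v).

Lemma rank_ord_inj : injective rank_ord.
Proof. by move=> v w /(congr1 val) /rank_inj. Qed.

Definition sorting : 'S_n := (perm rank_ord_inj)^-1.

Lemma rank_sorting p : rank (sorting p) = p.
Proof. by have := congr1 val (permKV (perm rank_ord_inj) p); rewrite permE. Qed.

Lemma sorting_rank v : sorting (rank_ord v) = v.
Proof. by rewrite -(permE rank_ord_inj) permK. Qed.

End SortByCode.

Section AscentsBefore.
Variables (n : nat) (s : 'S_n.+1).

Definition ascent (i : nat) : bool := (i < n) && (s (inord i) < s (inord i.+1)).

Definition ascents_before (p : nat) : nat := \sum_(0 <= i < p) ascent i.

Lemma ascents_beforeS p : ascents_before p.+1 = ascents_before p + ascent p.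
Proof. by rewrite /ascents_before big_nat_recr. Qed.

Lemma leq_ascents_before p p' : p <= p' -> ascents_before p <= ascents_before p'.
Proof.
move=> le_pp'; rewrite -(subnKC le_pp'); elim: (p' - p) => [|d IHd].
  by rewrite addn0.
by rewrite addnS ascents_beforeS; lia.
Qed.

Lemma ascentsE : ascents s = ascents_before n.
Proof.
pose succ_pair (i : 'I_n.+1) := (i, inord i.+1 : 'I_n.+1).
rewrite /ascents.
have -> : [set ij : 'I_n.+1 * 'I_n.+1 | (ij.2 == ij.1.+1 :> nat) && (s ij.1 < s ij.2)]
          = succ_pair @: [set i : 'I_n.+1 | ascent i].
  apply/setP => -[i j]; rewrite inE /=; apply/idP/imsetP.
    move=> /andP[/eqP j_def lt_s]; have lt_jn := ltn_ord j.
    have j_inord : j = inord i.+1 by apply: val_inj; rewrite /= inordK -j_def.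
    exists i; last by rewrite j_inord.
    by rewrite inE /ascent inord_val -j_inord lt_s andbT; lia.
  move=> [k]; rewrite inE /ascent => /andP[lt_kn lt_s] [-> ->] /=.
  rewrite inord_val in lt_s; rewrite inordK ?eqxx //; lia.
rewrite card_in_imset; last by move=> i j _ _ [].
rewrite card_set_sum -(big_mkord xpredT (fun i => nat_of_bool (ascent i))).
by rewrite -/(ascents_before n.+1) ascents_beforeS /ascent ltnn addn0.
Qed.

Lemma ascents_before_const i j : i <= j <= n ->
  ascents_before i = ascents_before j -> s (inord j) <= s (inord i).
Proof.
elim: j => [|j IHj] /andP[le_ij le_jn] eq_ij.
  by move: le_ij; rewrite leqn0 => /eqP ->.
move: le_ij; rewrite leq_eqVlt ltnS => /predU1P[-> // | le_ij].
have no_ascent : ascent j = false.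
  move: eq_ij (leq_ascents_before le_ij).
  by rewrite ascents_beforeS; case: ascent => /=; lia.
move: (no_ascent); rewrite /ascent le_jn /= => /negbT; rewrite -leqNgt => le_s.
apply: leq_trans le_s (IHj _ _); first by rewrite le_ij ltnW.
by rewrite eq_ij ascents_beforeS no_ascent addn0.
Qed.

End AscentsBefore.

Section AscentCode.
Variables (n q : nat).

Definition ascent_code (s : 'S_n.+1) : {ffun 'I_n.+1 -> 'I_q.+1} :=
  [ffun v => inord (ascents_before s ((s^-1)%g v))].

Variables (s : 'S_n.+1) (s_q : ascents s = q).

Lemma ascent_codeE v : ascent_code s v = ascents_before s ((s^-1)%g v) :> nat.
Proof.
rewrite ffunE inordK // ltnS -s_q ascentsE; apply: leq_ascents_before.
by rewrite -ltnS.
Qed.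

Lemma prec_ascent_code (p p' : 'I_n.+1) :
  p < p' -> prec (ascent_code s) (s p) (s p').
Proof.
move=> lt_pp'; rewrite /prec !ascent_codeE !permK.
have le_p'n : p <= p' <= n by rewrite ltnW // -ltnS ltn_ord.
have := ascents_before_const (s := s) le_p'n; rewrite !inord_val.
have := leq_ascents_before s (ltnW lt_pp').
have : nat_of_ord (s p') != s p.
  by rewrite val_eqE (inj_eq perm_inj) -val_eqE /= gtn_eqF.
lia.
Qed.

Lemma rank_ascent_code v : rank (ascent_code s) v = (s^-1)%g v.
Proof.
rewrite /rank; have -> : [set w | prec (ascent_code s) w v]
                       = (s^-1)%g @^-1: [set p : 'I_n.+1 | p < (s^-1)%g v].
  apply/setP => w; rewrite !inE; apply/idP/idP => [prec_wv | lt_w].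
    rewrite ltnNge leq_eqVlt negb_or; apply/andP; split.
      by apply: contraTneq prec_wv => /val_inj /perm_inj ->; rewrite prec_irr.
    by apply: contraTN prec_wv => /prec_ascent_code; rewrite !permKV => /prec_asym ->.
  by move: (prec_ascent_code lt_w); rewrite !permKV.
by rewrite card_preimset ?card_ord_lt 1?ltnW //; exact: perm_inj.
Qed.

End AscentCode.

Lemma ascent_code_inj n q :
  {in [set s : 'S_n.+1 | ascents s == q] &, injective (ascent_code q)}.
Proof.
move=> s1 s2; rewrite !inE => /eqP s1_q /eqP s2_q eq_code.
apply: invg_inj; apply/permP => v; apply: val_inj.
by rewrite /= -(rank_ascent_code s1_q) -(rank_ascent_code s2_q) eq_code.
Qed.

Lemma eulerian_le n q : eulerian n.+1 q <= q.+1 ^ n.+1.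
Proof.
rewrite /eulerian -(card_in_imset (@ascent_code_inj n q)).
by apply: leq_trans (max_card _) _; rewrite card_ffun !card_ord.
Qed.

Section Slack.
Variables (n q : nat).
Implicit Types f : {ffun 'I_n -> 'I_q.+1}.

(* If [slack f j], lowering by one the values at ranks >= j gives a map with
   values < q and the same order [prec]. *)
Definition slack f (j : nat) : bool :=
  [&& [forall v, (j <= rank f v) ==> (0 < f v)],
      [forall v, (rank f v < j) ==> (f v < q)] &
      [forall v, forall w,
         (rank f v < j <= rank f w) ==> (f v + 1 + (v < w) <= f w)]].

Definition lower_from (j : nat) f : {ffun 'I_n -> 'I_q.+1} :=
  [ffun v => inord (f v - (j <= rank f v))].

Lemma lower_fromE j f v : lower_from j f v = f v - (j <= rank f v) :> nat.
Proof. by rewrite ffunE inordK // (leq_ltn_trans (leq_subr _ _)). Qed.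

Variables (j : nat) (f : {ffun 'I_n -> 'I_q.+1}) (f_slack : slack f j).

Lemma prec_lower_from v w : prec (lower_from j f) v w = prec f v w.
Proof.
have /and3P[/forallP pos_hi /forallP _ /forallP gap] := f_slack.
have [-> | ne_vw] := eqVneq v w; first by rewrite !prec_irr.
have : nat_of_ord v != nat_of_ord w := ne_vw.
rewrite /prec !lower_fromE.
case: (leqP j (rank f v)) => hi_v; case: (leqP j (rank f w)) => hi_w /=.
- by have := implyP (pos_hi v) hi_v; have := implyP (pos_hi w) hi_w; lia.
- by have := implyP (forallP (gap w) v); rewrite hi_v hi_w => /(_ isT); lia.
- by have := implyP (forallP (gap v) w); rewrite hi_v hi_w => /(_ isT); lia.
- lia.
Qed.

Lemma rank_lower_from v : rank (lower_from j f) v = rank f v.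
Proof. by apply: eq_card => w; rewrite !inE prec_lower_from. Qed.

Lemma lower_from_lt v : lower_from j f v < q.
Proof.
have /and3P[/forallP pos_hi /forallP lt_lo _] := f_slack.
rewrite lower_fromE; have := ltn_ord (f v).
case: (leqP j (rank f v)) => [/(implyP (pos_hi v)) | /(implyP (lt_lo v))]; lia.
Qed.

End Slack.

Lemma lower_from_inj n q j :
  {in [set f : {ffun 'I_n -> 'I_q.+1} | slack f j] &, injective (lower_from j)}.
Proof.
move=> f1 f2; rewrite !inE => slack1 slack2 eq_lower.
apply/ffunP => v; apply: val_inj.
have eq_rank : rank f1 v = rank f2 v.
  by rewrite -(rank_lower_from slack1 v) -(rank_lower_from slack2 v) eq_lower.
have := congr1 (fun g : {ffun 'I_n -> 'I_q.+1} => nat_of_ord (g v)) eq_lower.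
move: slack1 slack2 => /and3P[/forallP pos1 _ _] /and3P[/forallP pos2 _ _].
rewrite /= !lower_fromE eq_rank.
case: (leqP j (rank f2 v)) => [hi | _]; last by rewrite !subn0.
by have := implyP (pos1 v); have := implyP (pos2 v); rewrite eq_rank hi; lia.
Qed.

Lemma card_slack n q j : #|[set f : {ffun 'I_n -> 'I_q.+1} | slack f j]| <= q ^ n.
Proof.
rewrite -(card_in_imset (@lower_from_inj n q j)).
pose small := [set g : {ffun 'I_n -> 'I_q.+1} in ffun_on [set i : 'I_q.+1 | i < q]].
have lower_on : lower_from j @: [set f | slack f j] \subset small.
  apply/subsetP => g /imsetP[f]; rewrite inE => f_slack ->.
  by rewrite inE; apply/ffun_onP => v; rewrite inE lower_from_lt.
apply: leq_trans (subset_leq_card lower_on) _.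
by rewrite cardsE card_ffun_on card_ord_lt // card_ord.
Qed.

Section Tight.
Variables (n q : nat) (f : {ffun 'I_n.+1 -> 'I_q.+1}).

Definition tight : bool := [forall j : 'I_n.+2, ~~ slack f j].

Lemma rank_sorting_inord p : p <= n -> rank f (sorting f (inord p)) = p.
Proof. by move=> le_pn; rewrite rank_sorting inordK. Qed.

Lemma sorted_code0 : ~~ slack f 0 -> f (sorting f (inord 0)) = 0 :> nat.
Proof.
set a := sorting f _; have rank_a : rank f a = 0 by exact: rank_sorting_inord.
apply: contraNeq => a_pos; apply/and3P; split; apply/forallP => v.
- by apply/implyP; have := @rank_le_code _ _ f a v; rewrite rank_a; lia.
- by apply/implyP.
- by apply/forallP => w; apply/implyP.
Qed.

Lemma sorted_codeS p : p < n -> ~~ slack f p.+1 ->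
  f (sorting f (inord p.+1)) = f (sorting f (inord p)) + ascent (sorting f) p :> nat.
Proof.
move=> lt_pn no_slack.
set a := sorting f (inord p); set b := sorting f (inord p.+1).
have rank_a : rank f a = p by apply: rank_sorting_inord; lia.
have rank_b : rank f b = p.+1 by exact: rank_sorting_inord.
have prec_ab : prec f a b by rewrite -ltn_rank rank_a rank_b.
have ascent_ab : ascent (sorting f) p = (a < b) by rewrite /ascent lt_pn.
have ne_ab : nat_of_ord a != b.
  by apply: contraTneq prec_ab => /val_inj ->; rewrite prec_irr.
have lt_bq := ltn_ord (f b).
apply/eqP; rewrite eqn_leq ascent_ab; apply/andP; split; last first.
  by move: prec_ab; rewrite /prec; case: (ltnP a b) => ?; lia.
rewrite leqNgt; apply: contra no_slack => jump.
apply/and3P; split; apply/forallP => v; [ | | apply/forallP => w]; apply/implyP.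
- by have := @rank_le_code _ _ f b v; rewrite rank_b; lia.
- by have := @rank_le_code _ _ f v a; rewrite rank_a; lia.
- have := @rank_le_code _ _ f v a; have := @rank_le_code _ _ f b w.
  rewrite rank_a rank_b; move: prec_ab; rewrite /prec.
  by case: (ltnP a b) => ?; case: (ltnP v w) => ?; lia.
Qed.

Lemma sorted_code_last : ~~ slack f n.+1 -> q <= f (sorting f (inord n)).
Proof.
set a := sorting f _; have rank_a : rank f a = n by exact: rank_sorting_inord.
rewrite leqNgt; apply: contra => lt_aq; apply/and3P; split; apply/forallP => v.
- by apply/implyP; have := rank_bounded f v; lia.
- by apply/implyP; have := @rank_le_code _ _ f v a; rewrite rank_a; lia.
- by apply/forallP => w; apply/implyP; have := rank_bounded f w; lia.
Qed.

Lemma tight_ascent_code :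
  tight -> ascents (sorting f) = q /\ f = ascent_code q (sorting f).
Proof.
move=> /forallP f_tight.
have no_slack j : j <= n.+1 -> ~~ slack f j.
  by move=> le_jn; have := f_tight (inord j); rewrite inordK.
have sorted_code p :
    p <= n -> f (sorting f (inord p)) = ascents_before (sorting f) p :> nat.
  elim: p => [_ | p IHp lt_pn].
    by rewrite sorted_code0 ?no_slack // /ascents_before big_geq.
  have le_pn := ltnW lt_pn.
  by rewrite sorted_codeS ?no_slack ?IHp ?ascents_beforeS.
have f_q : ascents (sorting f) = q.
  rewrite ascentsE -sorted_code //; apply/eqP; rewrite eqn_leq -ltnS ltn_ord.
  exact: sorted_code_last (no_slack _ (leqnn _)).
split=> //; apply/ffunP => v; apply: val_inj.
rewrite /= ascent_codeE // invgK -(sorting_rank f v) permKV -sorted_code.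
  by rewrite inord_val.
by rewrite -ltnS rank_bounded.
Qed.

End Tight.

Lemma card_tight n q :
  #|[set f : {ffun 'I_n.+1 -> 'I_q.+1} | tight f]| <= eulerian n.+1 q.
Proof.
apply: leq_trans (leq_imset_card (ascent_code q) _).
apply/subset_leq_card/subsetP => f; rewrite inE => /tight_ascent_code[f_q ->].
by apply: imset_f; rewrite inE f_q.
Qed.

Lemma expn_le_eulerian_add n q : q.+1 ^ n.+1 <= eulerian n.+1 q + n.+2 * q ^ n.+1.
Proof.
have tight_or_slack (f : {ffun 'I_n.+1 -> 'I_q.+1}) :
    1 <= tight f + \sum_(j < n.+2) slack f j.
  have [// | /forallPn[j /negPn f_slack]] := boolP (tight f).
  by rewrite (bigD1 j) //= f_slack.
have -> : q.+1 ^ n.+1 = \sum_(f : {ffun 'I_n.+1 -> 'I_q.+1}) 1.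
  by rewrite sum1_card card_ffun !card_ord.
apply: (@leq_trans (\sum_f (tight f + \sum_(j < n.+2) slack f j))).
  by apply: leq_sum => f _; exact: tight_or_slack.
rewrite big_split exchange_big /= -card_set_sum leq_add ?card_tight //.
rewrite -[X in X * _](card_ord n.+2) -sum_nat_const.
by apply: leq_sum => j _; rewrite -card_set_sum card_slack.
Qed.

Section RealBound.
Local Open Scope R_scope.

Lemma pow_exp k y : exp y ^ k = exp (INR k * y).
Proof.
elim: k => [|k IHk]; first by rewrite Rmult_0_l exp_0.
by rewrite S_INR -tech_pow_Rmult IHk -exp_plus; congr exp; ring.
Qed.

Lemma le_succ_mul_exp x : 0 <= x -> x <= (x + 1) * exp (- / (x + 1)).
Proof.
move=> x_ge0; have {1}-> : x = (x + 1) * (1 + - / (x + 1)) by field; lra.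
by apply: Rmult_le_compat_l; [lra | exact: exp_ineq1_le].
Qed.

Lemma succ_mul_pow_le N x : 0 <= x -> x + 1 < INR N / (ln (INR N + 1) + 1) ->
  (INR N + 1) * x ^ N <= (x + 1) ^ N / exp 1.
Proof.
move=> x_ge0 x_small; have N1_pos : 0 < INR N + 1 by have := pos_INR N; lra.
have ln_pos : 0 < ln (INR N + 1) + 1.
  have [-> | N_ne0] := Req_dec (INR N) 0; first by rewrite Rplus_0_l ln_1; lra.
  by rewrite -ln_1; have := pos_INR N; have := ln_increasing 1 (INR N + 1); lra.
have decay : x ^ N <= (x + 1) ^ N * exp (INR N * - / (x + 1)).
  rewrite -pow_exp -Rpow_mult_distr; apply: pow_incr.
  by split; [lra | exact: le_succ_mul_exp].
have tiny : exp (INR N * - / (x + 1)) < / (INR N + 1) * / exp 1.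
  rewrite -(exp_ln _ N1_pos) -!exp_Ropp -exp_plus; apply: exp_increasing.
  suff : ln (INR N + 1) + 1 < INR N / (x + 1) by rewrite /Rdiv; lra.
  apply: (Rmult_lt_reg_r (x + 1)); first lra.
  rewrite /Rdiv Rmult_assoc Rinv_l; last lra.
  move: x_small => /(Rmult_lt_compat_r _ _ _ ln_pos).
  by rewrite /Rdiv Rmult_assoc Rinv_l; lra.
have pow_pos : 0 < (x + 1) ^ N by apply: pow_lt; lra.
apply: Rle_trans (Rmult_le_compat_l _ _ _ (Rlt_le _ _ N1_pos) decay) _.
apply: Rle_trans (Rmult_le_compat_l _ _ _ (Rlt_le _ _ N1_pos)
          (Rmult_le_compat_l _ _ _ (Rlt_le _ _ pow_pos) (Rlt_le _ _ tiny))) _.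
by right; field; have := exp_pos 1; lra.
Qed.

End RealBound.

Lemma INR_expn a k : INR (a ^ k) = (INR a ^ k)%R.
Proof. by elim: k => [|k IHk]; rewrite ?expnS ?mult_INR ?IHk. Qed.

Theorem mainTheorem19 (n q : nat) :
  (2 <= n)%N ->
  (INR q < INR n / (ln (INR n + 1) + 1) - 1)%R ->
  ((1 - 1 / exp 1) * INR (q + 1) ^ n <= INR (eulerian n q))%R /\
  (INR (eulerian n q) <= INR (q + 1) ^ n)%R.
Proof.
case: n => [// | n] _ q_small.
have /leP/le_INR := eulerian_le n q; have /leP/le_INR := expn_le_eulerian_add n q.
have tail := @succ_mul_pow_le n.+1 (INR q) (pos_INR q).
rewrite addn1 plus_INR mult_INR !INR_expn !S_INR in q_small tail * => lower upper.
split=> //; have := tail ltac:(lra); lra.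
Qed.
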